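(* Assume CH. Let $\mathcal{I}$ be a $\sigma$-ideal on $\mathbb{R}$ satisfying the standing assumptions. Then there exists a partition of $\mathbb{R}$ into $\mathfrak{c}$ many pairwise disjoint strong $\mathcal{I}$-Luzin sets.
   Context: Standing assumptions on $\mathcal{I}$: $\mathcal{I}$ is a $\sigma$-ideal of subsets of $\mathbb{R}$ such that $\mathbb{R}\notin\mathcal{I}$; $x+I\in\mathcal{I}$ and $xI\in\mathcal{I}$ for all $x\in\mathbb{R}$, $I\in\mathcal{I}$; every member of $\mathcal{I}$ is contained in a Borel member of $\mathcal{I}$; and for all Borel $A,B\notin\mathcal{I}$ the set $A-B$ has nonempty interior. A set $L\subseteq\mathbb{R}$ is $\mathcal{I}$-Luzin if $|L|=\mathfrak{c}$ and $L\cap I$ is countable for every $I\in\mathcal{I}$; it is strong $\mathcal{I}$-Luzin if moreover $L\cap B$ is uncountable for every Borel set $B\notin\mathcal{I}$. *)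

From Stdlib Require Import Reals.
Open Scope R_scope.

Definition subset_R (A B : R -> Prop) : Prop := forall x, A x -> B x.

Definition open_R (U : R -> Prop) : Prop :=
  forall x, U x -> exists eps, 0 < eps /\ forall y, Rabs (y - x) < eps -> U y.

Inductive Borel : (R -> Prop) -> Prop :=
| Borel_open : forall U, open_R U -> Borel U
| Borel_compl : forall A, Borel A -> Borel (fun x => ~ A x)
| Borel_union : forall A : nat -> R -> Prop,
    (forall n, Borel (A n)) -> Borel (fun x => exists n, A n x).

(* countable = finite or countably infinite (empty included) *)
Definition countable_R (A : R -> Prop) : Prop :=
  exists f : nat -> R, forall x, A x -> exists n, f n = x.

Definition card_continuum (A : R -> Prop) : Prop :=
  exists f : R -> R, (forall x, A (f x)) /\
    (forall x y, f x = f y -> x = y) /\ (forall y, A y -> exists x, f x = y).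

Definition CH : Prop :=
  forall A : R -> Prop, countable_R A \/ card_continuum A.

Definition sigma_ideal (I : (R -> Prop) -> Prop) : Prop :=
  I (fun _ => False) /\
  (forall A B, subset_R A B -> I B -> I A) /\
  (forall A : nat -> R -> Prop, (forall n, I (A n)) -> I (fun x => exists n, A n x)).

Definition standing_assumptions (I : (R -> Prop) -> Prop) : Prop :=
  sigma_ideal I /\
  ~ I (fun _ => True) /\
  (forall x A, I A -> I (fun y => exists a, A a /\ y = x + a)) /\
  (forall x A, I A -> I (fun y => exists a, A a /\ y = x * a)) /\
  (forall A, I A -> exists B, Borel B /\ I B /\ subset_R A B) /\
  (forall A B, Borel A -> Borel B -> ~ I A -> ~ I B ->
     exists x eps, 0 < eps /\
       forall y, Rabs (y - x) < eps -> exists a b, A a /\ B b /\ y = a - b).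

Definition I_Luzin (I : (R -> Prop) -> Prop) (L : R -> Prop) : Prop :=
  card_continuum L /\
  forall J, I J -> countable_R (fun x => L x /\ J x).

Definition strong_I_Luzin (I : (R -> Prop) -> Prop) (L : R -> Prop) : Prop :=
  I_Luzin I L /\
  forall B, Borel B -> ~ I B -> ~ countable_R (fun x => L x /\ B x).

(* Under CH, well-order R in type omega_1 and index the Borel sets by reals as B_r.
   Recurse along the stages (a, n) of omega_1 x omega: stage (a, 0) adds a itself, and
   stage (a, n+1) serves the n-th pair (t, b) with t, b <= a by adding a new point of B_b
   avoiding every B_c in the ideal with c <= a; this is possible when B_b is not in the ideal,
   since the countably many sets and points to avoid have union in the ideal.  The piece of t
   collects the points whose first stage serves t.  A Borel set outside the ideal is served
   for t at uncountably many stages, whereas a set in the ideal lies in some B_c and so meets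
   the piece of t only in t and in the countably many points added before stage (c, 1). *)
From Stdlib Require Import Reals Lra Lia Classical ClassicalEpsilon.
From Stdlib Require Import FunctionalExtensionality PropExtensionality.
From Stdlib Require Import Wellfounded.Inverse_Image.
From Stdlib Require Cantor.
From mathcomp Require wochoice boolp.
From mathcomp Require Import Rstruct.
Set Bullet Behavior "Strict Subproofs".
Open Scope R_scope.

Section SigmaIdeal.
Variable J : (R -> Prop) -> Prop.
Hypothesis HJ : sigma_ideal J.

Lemma sigma_ideal_sub (A B : R -> Prop) : subset_R A B -> J B -> J A.
Proof. destruct HJ as [_ [Hsub _]]. apply Hsub. Qed.

Lemma sigma_ideal_union (A B : R -> Prop) : J A -> J B -> J (fun x => A x \/ B x).
Proof.
  intros HA HB. destruct HJ as [_ [_ Hcup]].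
  apply (sigma_ideal_sub _ (fun x => exists n, (match n with O => A | _ => B end) x)).
  - intros x [H|H]; [exists O | exists 1%nat]; exact H.
  - apply Hcup. intros [|n]; assumption.
Qed.

Lemma sigma_ideal_bigcup_countable (S : R -> Prop) (A : R -> R -> Prop) :
  countable_R S -> (forall a, S a -> J (A a)) -> J (fun x => exists a, S a /\ A a x).
Proof.
  intros [f Hf] HA. destruct HJ as [Hempty [_ Hcup]].
  apply (sigma_ideal_sub _ (fun x => exists n, S (f n) /\ A (f n) x)).
  - intros x [a [Sa Ax]]. destruct (Hf a Sa) as [n <-]. exists n. auto.
  - apply (Hcup (fun n x => S (f n) /\ A (f n) x)). intros n.
    destruct (classic (S (f n))) as [Hs|Hs].
    + apply (sigma_ideal_sub _ (A (f n))); [intros x [_ H]; exact H | apply HA, Hs].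
    + apply (sigma_ideal_sub _ (fun _ => False)); [intros x [H _]; contradiction | exact Hempty].
Qed.

End SigmaIdeal.

Lemma countable_R_sigma_ideal : sigma_ideal countable_R.
Proof.
  split; [|split].
  - exists (fun _ => 0). intros x [].
  - intros A B HAB [f Hf]. exists f. intros x Ax. apply Hf, HAB, Ax.
  - intros A HA. destruct (choice (fun n f => forall x, A n x -> exists k, f k = x) HA) as [F HF].
    exists (fun k => F (fst (Cantor.of_nat k)) (snd (Cantor.of_nat k))).
    intros x [n Hn]. destruct (HF n x Hn) as [m Hm].
    exists (Cantor.to_nat (n, m)). rewrite Cantor.cancel_of_to. exact Hm.
Qed.

Lemma countable_R_range (f : nat -> R) : countable_R (fun x => exists k, f k = x).
Proof. exists f. intros x Hx. exact Hx. Qed.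

Lemma countable_R_singleton (a : R) : countable_R (fun x => x = a).
Proof. exists (fun _ => a). intros x ->. exists O. reflexivity. Qed.

Lemma countable_R_inj (S T : R -> Prop) (phi : R -> R) :
  (forall a b, S a -> S b -> phi a = phi b -> a = b) ->
  (forall a, S a -> T (phi a)) -> countable_R T -> countable_R S.
Proof.
  intros Hinj HST [f Hf].
  exists (fun k => epsilon (inhabits 0) (fun a => S a /\ phi a = f k)).
  intros a Sa. destruct (Hf (phi a) (HST a Sa)) as [k Hk]. exists k.
  assert (Hex : exists a', S a' /\ phi a' = f k) by (exists a; auto).
  destruct (epsilon_spec (inhabits 0) _ Hex) as [H1 H2].
  apply Hinj; auto. congruence.
Qed.

Lemma Borel_ext (A B : R -> Prop) : (forall x, A x <-> B x) -> Borel A -> Borel B.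
Proof.
  intros HAB HA. replace B with A; [exact HA|].
  apply functional_extensionality. intros x. apply propositional_extensionality, HAB.
Qed.

Lemma Borel_singleton (a : R) : Borel (fun x => x = a).
Proof.
  apply (Borel_ext (fun x => ~ x <> a)); [intros x; split; [apply NNPP | tauto]|].
  apply Borel_compl, Borel_open. intros x Hx. exists (Rabs (x - a)).
  split; [apply Rabs_pos_lt; lra|]. intros y Hy ->. rewrite Rabs_minus_sym in Hy. lra.
Qed.

Section StandingAssumptions.
Variable I : (R -> Prop) -> Prop.
Hypothesis HI : standing_assumptions I.

(* [{a} - {a} = {0}] has empty interior. *)
Lemma standing_ideal_singleton (a : R) : I (fun x => x = a).
Proof.
  destruct HI as [_ [_ [_ [_ [_ Hdiff]]]]].
  apply NNPP. intros Ha.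
  destruct (Hdiff _ _ (Borel_singleton a) (Borel_singleton a) Ha Ha) as [x [eps [Heps Hball]]].
  assert (Hzero : forall y, Rabs (y - x) < eps -> y = 0).
  { intros y Hy. destruct (Hball y Hy) as [b [c [-> [-> ->]]]]. ring. }
  assert (Hx : x = 0) by (apply Hzero; rewrite Rminus_diag, Rabs_R0; exact Heps).
  assert (Hx' : x + eps / 2 = 0).
  { apply Hzero. replace (x + eps / 2 - x) with (eps / 2) by ring. rewrite Rabs_right; lra. }
  lra.
Qed.

Lemma standing_ideal_countable (A : R -> Prop) : countable_R A -> I A.
Proof.
  intros [f Hf]. destruct HI as [HsI _].
  apply (sigma_ideal_sub I HsI _ (fun x => exists n, x = f n)).
  - intros x Ax. destruct (Hf x Ax) as [n <-]. exists n. reflexivity.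
  - destruct HsI as [_ [_ Hcup]]. apply (Hcup (fun n x => x = f n)).
    intros n. apply standing_ideal_singleton.
Qed.

Lemma standing_R_uncountable : ~ countable_R (fun _ => True).
Proof. destruct HI as [_ [HR _]]. intros Hc. exact (HR (standing_ideal_countable _ Hc)). Qed.

End StandingAssumptions.

Definition basic_center (k : nat) : R :=
  let (N, ab) := Cantor.of_nat k in
  let (a, b) := Cantor.of_nat ab in (INR a - INR b) / (INR N + 1).
Definition basic_radius (k : nat) : R := 2 / (INR (fst (Cantor.of_nat k)) + 1).
Definition basic_ball (k : nat) (y : R) : Prop := Rabs (y - basic_center k) < basic_radius k.

Lemma basic_center_near (x : R) (N : nat) : exists k,
  basic_radius k = 2 / (INR N + 1) /\ Rabs (x - basic_center k) <= 1 / (INR N + 1).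
Proof.
  set (z := up (x * (INR N + 1))).
  destruct (archimed (x * (INR N + 1))) as [Hz1 Hz2]. fold z in Hz1, Hz2.
  exists (Cantor.to_nat (N, Cantor.to_nat (Z.to_nat z, Z.to_nat (- z)))).
  unfold basic_radius, basic_center. rewrite !Cantor.cancel_of_to; cbn [fst].
  split; [reflexivity|].
  assert (HN : 0 < INR N + 1) by (pose proof (pos_INR N); lra).
  replace (INR (Z.to_nat z) - INR (Z.to_nat (- z))) with (IZR z)
    by (rewrite !INR_IZR_INZ, <- minus_IZR; f_equal; lia).
  replace (x - IZR z / (INR N + 1)) with ((x * (INR N + 1) - IZR z) / (INR N + 1)) by (field; lra).
  unfold Rdiv. rewrite Rabs_mult, Rabs_inv, (Rabs_right (INR N + 1)) by lra.
  apply Rmult_le_compat_r; [left; apply Rinv_0_lt_compat; lra|].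
  rewrite Rabs_left1; lra.
Qed.

Lemma open_R_basic_cover (U : R -> Prop) : open_R U -> forall x, U x ->
  exists k, basic_ball k x /\ subset_R (basic_ball k) U.
Proof.
  intros HU x Ux. destruct (HU x Ux) as [eps [Heps Hball]].
  destruct (archimed_cor1 (eps / 3)) as [N [HN HN0]]; [lra|].
  destruct (basic_center_near x N) as [k [Hrad Hcen]].
  assert (HN1 : 0 < INR N) by (apply lt_0_INR; lia).
  assert (Hsmall : 3 / (INR N + 1) < eps).
  { assert (/ (INR N + 1) < / INR N) by (apply Rinv_lt_contravar; nra).
    unfold Rdiv. lra. }
  assert (Hpos : 0 < 1 / (INR N + 1)) by (apply Rdiv_lt_0_compat; lra).
  exists k. unfold basic_ball. rewrite Hrad. split.
  - lra.
  - intros y Hy. apply Hball.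
    replace (y - x) with ((y - basic_center k) - (x - basic_center k)) by ring.
    eapply Rle_lt_trans; [apply Rabs_triang|]. rewrite Rabs_Ropp. lra.
Qed.

Inductive borel_code : Type :=
| Bc_open (s : nat -> bool)
| Bc_compl (c : borel_code)
| Bc_union (f : nat -> borel_code).

Fixpoint borel_code_set (c : borel_code) : R -> Prop :=
  match c with
  | Bc_open s => fun x => exists k, s k = true /\ basic_ball k x
  | Bc_compl c => fun x => ~ borel_code_set c x
  | Bc_union f => fun x => exists n, borel_code_set (f n) x
  end.

Lemma Borel_has_code (B : R -> Prop) : Borel B ->
  exists c, forall x, B x <-> borel_code_set c x.
Proof.
  induction 1 as [U HU | A _ [c Hc] | A _ IH].
  - set (inside k := if excluded_middle_informative (subset_R (basic_ball k) U)
                     then true else false).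
    exists (Bc_open inside). intros x; simpl; split.
    + intros Ux. destruct (open_R_basic_cover U HU x Ux) as [k [Hk Hsub]].
      exists k. unfold inside. destruct (excluded_middle_informative _); tauto.
    + intros [k [Hk Hx]]. unfold inside in Hk.
      destruct (excluded_middle_informative _) as [Hsub|]; [exact (Hsub x Hx) | discriminate].
  - exists (Bc_compl c). intros x; simpl. rewrite Hc. tauto.
  - destruct (choice (fun n c => forall x, A n x <-> borel_code_set c x) IH) as [f Hf].
    exists (Bc_union f). intros x; simpl. split; intros [n Hn]; exists n; apply Hf, Hn.
Qed.

Fixpoint borel_code_bits (c : borel_code) (k : nat) : bool :=
  match c, k with
  | Bc_open _, O | Bc_open _, 1%nat => false
  | Bc_compl _, O => true
  | Bc_compl _, 1%nat => false
  | Bc_union _, O | Bc_union _, 1%nat => true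
  | Bc_open s, S (S k) => s k
  | Bc_compl c, S (S k) => borel_code_bits c k
  | Bc_union f, S (S k) =>
      borel_code_bits (f (fst (Cantor.of_nat k))) (snd (Cantor.of_nat k))
  end.

Lemma borel_code_bits_inj (c c' : borel_code) :
  borel_code_bits c = borel_code_bits c' -> c = c'.
Proof.
  revert c'. induction c as [s | c IH | f IH]; intros [s' | c' | f'] E;
    pose proof (f_equal (fun h => h O) E) as E0; pose proof (f_equal (fun h => h 1%nat) E) as E1;
    simpl in E0, E1; try discriminate;
    assert (E2 : forall k, borel_code_bits _ (S (S k)) = borel_code_bits _ (S (S k)))
      by (intros k; exact (f_equal (fun h => h (S (S k))) E)); simpl in E2.
  - f_equal. apply functional_extensionality, E2.
  - f_equal. apply IH, functional_extensionality, E2.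
  - f_equal. apply functional_extensionality. intros i. apply IH.
    apply functional_extensionality. intros j.
    pose proof (E2 (Cantor.to_nat (i, j))) as Ek. rewrite Cantor.cancel_of_to in Ek. exact Ek.
Qed.

Definition ternary_digit (s : nat -> bool) (k : nat) : R :=
  if s k then / 3 ^ S k else 0.

Fixpoint ternary_sum (s : nat -> bool) (m : nat) : R :=
  match m with O => 0 | S m => ternary_sum s m + ternary_digit s m end.

Lemma inv_pow3_pos (k : nat) : 0 < / 3 ^ k.
Proof. apply Rinv_0_lt_compat, pow_lt. lra. Qed.

Lemma ternary_sum_tail (s : nat -> bool) (n d : nat) :
  0 <= ternary_sum s (n + d) - ternary_sum s n <= (/ 3 ^ n - / 3 ^ (n + d)) / 2.
Proof.
  induction d as [|d IH].
  - rewrite Nat.add_0_r. lra.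
  - rewrite Nat.add_succ_r. simpl ternary_sum.
    assert (E : / 3 ^ S (n + d) = / 3 ^ (n + d) / 3).
    { simpl. field. apply pow_nonzero. lra. }
    pose proof (inv_pow3_pos (n + d)).
    unfold ternary_digit. rewrite E. destruct (s (n + d)%nat); lra.
Qed.

Lemma ternary_sum_le (s : nat -> bool) (m m' : nat) :
  (m <= m')%nat -> ternary_sum s m <= ternary_sum s m'.
Proof.
  intros H. replace m' with (m + (m' - m))%nat by lia.
  pose proof (ternary_sum_tail s m (m' - m)). lra.
Qed.

Lemma ternary_sum_bounded (s : nat -> bool) : bound (fun y => exists m, y = ternary_sum s m).
Proof.
  exists 1. intros y [m ->].
  pose proof (ternary_sum_tail s O m). pose proof (inv_pow3_pos m). simpl in *. lra.
Qed.

Definition ternary_value (s : nat -> bool) : R :=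
  proj1_sig (completeness _ (ternary_sum_bounded s) (ex_intro _ 0 (ex_intro _ O eq_refl))).

Lemma ternary_value_lub (s : nat -> bool) :
  is_lub (fun y => exists m, y = ternary_sum s m) (ternary_value s).
Proof. unfold ternary_value. destruct (completeness _ _ _) as [v Hv]. exact Hv. Qed.

Lemma ternary_sum_agree (s s' : nat -> bool) (n : nat) :
  (forall k, (k < n)%nat -> s k = s' k) -> ternary_sum s n = ternary_sum s' n.
Proof.
  induction n as [|n IH]; intros Hag; [reflexivity|]. simpl.
  rewrite IH by (intros; apply Hag; lia). unfold ternary_digit. rewrite Hag by lia. reflexivity.
Qed.

(* Digit [n] alone outweighs all later digits: [1/3^(n+1) > 1/2 * 1/3^(n+1)]. *)
Lemma ternary_value_lt (s s' : nat -> bool) (n : nat) :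
  (forall k, (k < n)%nat -> s k = s' k) -> s n = true -> s' n = false ->
  ternary_value s' < ternary_value s.
Proof.
  intros Hag Hs Hs'.
  set (C := ternary_sum s n).
  assert (H1 : ternary_sum s (S n) = C + / 3 ^ S n) by (simpl; unfold ternary_digit; rewrite Hs; reflexivity).
  assert (H2 : ternary_sum s' (S n) = C).
  { simpl. unfold ternary_digit. rewrite Hs', <- (ternary_sum_agree s s' n Hag). unfold C. ring. }
  pose proof (inv_pow3_pos (S n)).
  destruct (ternary_value_lub s) as [Hub _]. destruct (ternary_value_lub s') as [_ Hlub].
  assert (A1 : C + / 3 ^ S n <= ternary_value s) by (rewrite <- H1; apply Hub; exists (S n); reflexivity).
  assert (A2 : ternary_value s' <= C + / 3 ^ S n / 2).
  { apply Hlub. intros y [m ->].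
    destruct (Compare_dec.le_lt_dec m (S n)) as [Hm|Hm].
    - pose proof (ternary_sum_le s' m (S n) Hm). lra.
    - replace m with (S n + (m - S n))%nat by lia.
      pose proof (ternary_sum_tail s' (S n) (m - S n)).
      pose proof (inv_pow3_pos (S n + (m - S n))). lra. }
  lra.
Qed.

Lemma first_difference (s s' : nat -> bool) : s <> s' ->
  exists n, s n <> s' n /\ forall k, (k < n)%nat -> s k = s' k.
Proof.
  intros Hne.
  assert (Hex : exists n, s n <> s' n).
  { apply NNPP. intros Hn. apply Hne, functional_extensionality. intros k.
    apply NNPP. intros Hk. apply Hn. exists k. exact Hk. }
  destruct Hex as [n Hn].
  induction n as [n IHn] using (well_founded_induction Wf_nat.lt_wf).
  destruct (classic (exists k, (k < n)%nat /\ s k <> s' k)) as [[k [Hk1 Hk2]]|Hno].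
  - exact (IHn k Hk1 Hk2).
  - exists n. split; [exact Hn|]. intros k Hk. apply NNPP. intros Hk'. apply Hno. eauto.
Qed.

Lemma ternary_value_inj (s s' : nat -> bool) : ternary_value s = ternary_value s' -> s = s'.
Proof.
  intros E. apply NNPP. intros Hne.
  destruct (first_difference s s' Hne) as [n [Hn Hag]].
  destruct (s n) eqn:Hs, (s' n) eqn:Hs'; try congruence.
  - pose proof (ternary_value_lt s s' n Hag Hs Hs'). lra.
  - pose proof (ternary_value_lt s' s n (fun k Hk => eq_sym (Hag k Hk)) Hs' Hs). lra.
Qed.

Definition borel_index (r : R) : R -> Prop :=
  borel_code_set (epsilon (inhabits (Bc_open (fun _ => false)))
                          (fun c => ternary_value (borel_code_bits c) = r)).

Lemma borel_index_onto (B : R -> Prop) : Borel B -> exists r, forall x, B x <-> borel_index r x.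
Proof.
  intros HB. destruct (Borel_has_code B HB) as [c Hc].
  exists (ternary_value (borel_code_bits c)).
  assert (Hex : exists c', ternary_value (borel_code_bits c') = ternary_value (borel_code_bits c))
    by (exists c; reflexivity).
  pose proof (epsilon_spec (inhabits (Bc_open (fun _ => false))) _ Hex) as Hs.
  apply ternary_value_inj, borel_code_bits_inj in Hs.
  unfold borel_index. rewrite Hs. exact Hc.
Qed.
Lemma well_ordering_R : exists le : R -> R -> Prop,
  forall P : R -> Prop, (exists x, P x) -> exists! z, P z /\ forall x, P x -> le z x.
Proof.
  destruct (wochoice.well_ordering_principle _ : {r : R -> R -> bool | wochoice.well_order r}) as [r Hr].
  exists (fun a b => r a b = true). intros P [x Px].
  destruct (Hr (fun y => boolp.asbool (P y))) as [z [[Hz Hmin] Huniq]].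
  { exists x. apply boolp.asboolT, Px. }
  exists z. split.
  - split; [exact (@boolp.asboolW (P z) Hz)|]. intros y Py. apply Hmin, boolp.asboolT, Py.
  - intros z' [Pz' Hmin']. apply Huniq. split; [apply boolp.asboolT, Pz'|].
    intros y Hy. apply Hmin', (@boolp.asboolW (P y) Hy).
Qed.

Lemma well_founded_minimal {A : Type} (lt : A -> A -> Prop) : well_founded lt ->
  forall P : A -> Prop, (exists x, P x) -> exists z, P z /\ forall y, lt y z -> ~ P y.
Proof.
  intros Hwf P [x Px]. induction x as [x IH] using (well_founded_induction Hwf).
  destruct (classic (exists y, lt y x /\ P y)) as [[y [Hyx Py]]|Hno].
  - exact (IH y Hyx Py).
  - exists x. split; [exact Px|]. intros y Hyx Py. apply Hno. eauto.
Qed.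

Definition strict_well_order (lt : R -> R -> Prop) : Prop :=
  well_founded lt /\ (forall a b, lt a b \/ a = b \/ lt b a) /\
  (forall a b c, lt a b -> lt b c -> lt a c).

Lemma strict_well_order_R : exists lt, strict_well_order lt.
Proof.
  destruct well_ordering_R as [le Hle].
  assert (Hmin : forall P, (exists x, P x) -> exists z, P z /\ forall x, P x -> le z x).
  { intros P HP. destruct (Hle P HP) as [z [Hz _]]. exists z. exact Hz. }
  assert (Hanti : forall a b, le a b -> le b a -> a = b).
  { intros a b Hab Hba. destruct (Hle (fun y => y = a \/ y = b)) as [z [_ Huniq]]; [eauto|].
    assert (Hrefl : forall c, le c c).
    { intros c. destruct (Hmin (fun y => y = c)) as [? [-> Hc]]; [eauto|]. auto. }
    transitivity z; [symmetry|]; apply Huniq; split; auto; intros x [-> | ->]; auto. }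
  assert (Htot : forall a b, le a b \/ le b a).
  { intros a b. destruct (Hmin (fun y => y = a \/ y = b)) as [z [[-> | ->] Hz]]; eauto. }
  exists (fun a b => le a b /\ a <> b). split; [|split].
  - intros x. apply NNPP. intros Hx.
    destruct (Hmin (fun y => ~ Acc (fun a b => le a b /\ a <> b) y)) as [z [Hz Hzmin]]; [eauto|].
    apply Hz. constructor. intros y [Hyz Hne]. apply NNPP. intros Hy.
    apply Hne, Hanti; auto.
  - intros a b. destruct (classic (a = b)) as [|Hne]; [auto|].
    destruct (Htot a b); [left | right; right]; split; auto.
  - intros a b c [Hab Hab'] [Hbc Hbc'].
    destruct (Hmin (fun y => y = a \/ y = b \/ y = c)) as [z [[-> | [-> | ->]] Hz]]; [eauto | | |].
    + split; [apply Hz; auto|]. intros ->. apply Hab', Hanti; auto.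
    + exfalso. apply Hab', Hanti; auto.
    + exfalso. apply Hbc', Hanti; auto.
Qed.

Lemma strict_well_order_pullback (lt : R -> R -> Prop) (phi : R -> R) :
  strict_well_order lt -> (forall x y, phi x = phi y -> x = y) ->
  strict_well_order (fun a b => lt (phi a) (phi b)).
Proof.
  intros [Hwf [Htri Htr]] Hinj. split; [|split].
  - apply wf_inverse_image, Hwf.
  - intros a b. destruct (Htri (phi a) (phi b)) as [|[E|]]; auto.
  - intros a b c. apply Htr.
Qed.

Definition omega1_order (lt : R -> R -> Prop) : Prop :=
  strict_well_order lt /\ forall a, countable_R (fun b => lt b a).

(* If some initial segment is uncountable, the least such one has type omega_1 and,
   by CH, is in bijection with R. *)
Lemma omega1_order_exists : CH -> exists lt, omega1_order lt.
Proof.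
  intros HCH. destruct strict_well_order_R as [lt0 Hlt0].
  destruct (classic (exists p, ~ countable_R (fun b => lt0 b p))) as [Hp | Hall].
  2:{ exists lt0. split; [exact Hlt0|]. intros a. apply NNPP. intros Ha. eauto. }
  destruct (well_founded_minimal lt0 (proj1 Hlt0) _ Hp) as [p [Hunc Hpmin]].
  destruct (HCH (fun b => lt0 b p)) as [|[phi [Hphi [Hinj _]]]]; [contradiction|].
  exists (fun a b => lt0 (phi a) (phi b)).
  split; [apply strict_well_order_pullback; assumption|]. intros b.
  apply (countable_R_inj _ (fun c => lt0 c (phi b)) phi); [auto | auto |].
  apply NNPP. intros Hb. exact (Hpmin _ (Hphi b) Hb).
Qed.

Section Construction.
Variable I : (R -> Prop) -> Prop.
Hypothesis HI : standing_assumptions I.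
Variable lt : R -> R -> Prop.
Hypothesis Hlt : omega1_order lt.

Let le (a b : R) : Prop := lt a b \/ a = b.

Lemma omega1_lt_trichotomy (a b : R) : lt a b \/ a = b \/ lt b a.
Proof. apply Hlt. Qed.

Lemma omega1_le_trans (a b c : R) : le a b -> le b c -> le a c.
Proof.
  destruct Hlt as [[_ [_ Htr]] _]. unfold le.
  intros [Hab | ->] [Hbc | ->]; eauto.
Qed.

Lemma omega1_le_segment_countable (a : R) : countable_R (fun b => le b a).
Proof. apply sigma_ideal_union; [apply countable_R_sigma_ideal | apply Hlt | apply countable_R_singleton]. Qed.

Lemma omega1_le_upper_bound (a b : R) : exists m, le a m /\ le b m.
Proof.
  destruct (omega1_lt_trichotomy a b) as [H | [-> | H]]; unfold le; eauto.
Qed.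

Definition stage_lt (s s' : R * nat) : Prop :=
  lt (fst s) (fst s') \/ (fst s = fst s' /\ (snd s < snd s')%nat).

Lemma stage_lt_wf : well_founded stage_lt.
Proof.
  intros [a n]. revert n.
  induction a as [a IHa] using (well_founded_induction (proj1 (proj1 Hlt))).
  intros n. induction n as [n IHn] using (well_founded_induction Wf_nat.lt_wf).
  constructor. intros [b m] [H | [H1 H2]]; simpl in *.
  - apply IHa, H.
  - subst b. apply IHn, H2.
Qed.

Lemma stage_lt_trichotomy (s s' : R * nat) : stage_lt s s' \/ s = s' \/ stage_lt s' s.
Proof.
  destruct s as [a n], s' as [b m]. unfold stage_lt; simpl.
  destruct (omega1_lt_trichotomy a b) as [H | [-> | H]]; auto.
  destruct (Compare_dec.lt_eq_lt_dec n m) as [[H | ->] | H]; auto.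
Qed.

Definition below_enum (a : R) : nat -> R :=
  epsilon (inhabits (fun _ => 0)) (fun f => forall t, le t a -> exists i, f i = t).

Definition pair_enum (a : R) (k : nat) : R * R :=
  (below_enum a (fst (Cantor.of_nat k)), below_enum a (snd (Cantor.of_nat k))).

Lemma pair_enum_onto (a t b : R) : le t a -> le b a -> exists n, pair_enum a n = (t, b).
Proof.
  assert (Hb : forall t, le t a -> exists i, below_enum a i = t).
  { unfold below_enum. apply epsilon_spec. destruct (omega1_le_segment_countable a) as [f Hf]. eauto. }
  intros Ht Hb'. destruct (Hb t Ht) as [i Hi]. destruct (Hb b Hb') as [j Hj].
  exists (Cantor.to_nat (i, j)). unfold pair_enum. rewrite Cantor.cancel_of_to. simpl. congruence.
Qed.

Definition small_upto (a p : R) : Prop :=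
  exists c, le c a /\ I (borel_index c) /\ borel_index c p.

Definition admissible (a : R) (n : nat) (prev : R -> Prop) (p : R) : Prop :=
  borel_index (snd (pair_enum a n)) p /\ ~ small_upto a p /\ ~ prev p.

(* Falling back to [a] makes the stage repeat the point of stage [(a, 0)]. *)
Definition choose_point (a : R) (n : nat) (prev : R -> Prop) : R :=
  epsilon (inhabits 0)
    (fun p => admissible a n prev p \/ (~ (exists q, admissible a n prev q) /\ p = a)).

Definition stage_step (s : R * nat) (rec : forall s', stage_lt s' s -> R) : R :=
  match snd s with
  | O => fst s
  | S n => choose_point (fst s) n (fun p => exists s' (H : stage_lt s' s), rec s' H = p)
  end.

Definition stage_point : R * nat -> R := Fix stage_lt_wf (fun _ => R) stage_step.

Definition earlier_points (s : R * nat) (p : R) : Prop :=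
  exists s', stage_lt s' s /\ stage_point s' = p.

Lemma stage_point_unfold (s : R * nat) :
  stage_point s = stage_step s (fun s' _ => stage_point s').
Proof.
  apply (Fix_eq stage_lt_wf (fun _ => R) stage_step).
  intros [a [|n]] f f' Hff; [reflexivity|]. unfold stage_step; simpl.
  f_equal. apply functional_extensionality. intros p. apply propositional_extensionality.
  split; intros [s' [H <-]]; exists s', H; [symmetry|]; apply Hff.
Qed.

Lemma stage_point_0 (a : R) : stage_point (a, O) = a.
Proof. rewrite stage_point_unfold. reflexivity. Qed.

Lemma stage_point_S (a : R) (n : nat) :
  admissible a n (earlier_points (a, S n)) (stage_point (a, S n)) \/
  (~ (exists q, admissible a n (earlier_points (a, S n)) q) /\ stage_point (a, S n) = a).
Proof.
  replace (stage_point (a, S n)) with (choose_point a n (earlier_points (a, S n))).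
  - unfold choose_point. apply epsilon_spec.
    destruct (classic (exists q, admissible a n (earlier_points (a, S n)) q)) as [[q Hq] | Hno];
      eauto.
  - rewrite stage_point_unfold. unfold stage_step; simpl. f_equal.
    apply functional_extensionality. intros p. apply propositional_extensionality.
    split; [intros [s' [H E]]; eauto | intros [s' [H E]]; exists s'; eauto].
Qed.

Definition points_upto (a x : R) : Prop := exists b k, le b a /\ stage_point (b, k) = x.

Lemma points_upto_countable (a : R) : countable_R (points_upto a).
Proof.
  apply (sigma_ideal_sub _ countable_R_sigma_ideal _
           (fun x => exists b, le b a /\ exists k, stage_point (b, k) = x)).
  - intros x [b [k [Hb Hx]]]. eauto.
  - apply sigma_ideal_bigcup_countable;
      [apply countable_R_sigma_ideal | apply omega1_le_segment_countable |].
    intros b _. apply countable_R_range.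
Qed.

Lemma earlier_points_in_ideal (s : R * nat) : I (earlier_points s).
Proof.
  apply standing_ideal_countable; [exact HI|].
  apply (sigma_ideal_sub _ countable_R_sigma_ideal _ (points_upto (fst s))).
  - intros x [[b k] [H <-]]. exists b, k. split; [|reflexivity].
    destruct H as [H | [H _]]; [left | right]; exact H.
  - apply points_upto_countable.
Qed.

Lemma small_upto_in_ideal (a : R) : I (small_upto a).
Proof.
  destruct HI as [HsI _].
  apply (sigma_ideal_bigcup_countable I HsI (fun c => le c a)
           (fun c p => I (borel_index c) /\ borel_index c p)); [apply omega1_le_segment_countable|].
  intros c _. destruct (classic (I (borel_index c))) as [Hc | Hc].
  - apply (sigma_ideal_sub I HsI _ (borel_index c)); [intros x [_ H]; exact H | exact Hc].
  - apply (sigma_ideal_sub I HsI _ (fun _ => False)); [intros x [H _]; contradiction | apply HsI].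
Qed.

Lemma stage_point_admissible (a : R) (n : nat) : ~ I (borel_index (snd (pair_enum a n))) ->
  admissible a n (earlier_points (a, S n)) (stage_point (a, S n)).
Proof.
  intros HnI. destruct (stage_point_S a n) as [H | [Hno _]]; [exact H|].
  exfalso. apply HnI.
  apply (sigma_ideal_sub I (proj1 HI) _ (fun x => small_upto a x \/ earlier_points (a, S n) x)).
  - intros x Hx. apply NNPP. intros Hx'. apply Hno. exists x.
    unfold admissible. tauto.
  - apply sigma_ideal_union; [apply HI | apply small_upto_in_ideal | apply earlier_points_in_ideal].
Qed.

Definition stage_target (s : R * nat) : R :=
  match snd s with O => fst s | S n => fst (pair_enum (fst s) n) end.

Definition piece (t x : R) : Prop :=
  exists s, stage_point s = x /\ stage_target s = t /\
            forall s', stage_lt s' s -> stage_point s' <> x.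

Lemma piece_cover (x : R) : exists t, piece t x.
Proof.
  destruct (well_founded_minimal stage_lt stage_lt_wf (fun s => stage_point s = x))
    as [s [Hs Hmin]]; [exists (x, O); apply stage_point_0|].
  exists (stage_target s), s. auto.
Qed.

Lemma piece_disjoint (t t' x : R) : t <> t' -> piece t x -> piece t' x -> False.
Proof.
  intros Htt' [s [Hs [Ht Hmin]]] [s' [Hs' [Ht' Hmin']]].
  destruct (stage_lt_trichotomy s s') as [H | [-> | H]].
  - exact (Hmin' s H Hs).
  - apply Htt'. congruence.
  - exact (Hmin s' H Hs').
Qed.

Lemma serving_stage_point (a t b : R) (n : nat) :
  pair_enum a n = (t, b) -> ~ I (borel_index b) ->
  piece t (stage_point (a, S n)) /\ borel_index b (stage_point (a, S n)).
Proof.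
  intros Hn HnI.
  assert (HnI' : ~ I (borel_index (snd (pair_enum a n)))) by (rewrite Hn; exact HnI).
  destruct (stage_point_admissible a n HnI') as [Hb [_ Hnew]].
  rewrite Hn in Hb. split; [|exact Hb].
  exists (a, S n). split; [reflexivity|]. split.
  - unfold stage_target; cbn [fst snd]. rewrite Hn. reflexivity.
  - intros s' Hs' E. apply Hnew. exists s'. auto.
Qed.

Lemma piece_Borel_uncountable (t : R) (B : R -> Prop) :
  Borel B -> ~ I B -> ~ countable_R (fun x => piece t x /\ B x).
Proof.
  intros HB HnB Hcnt.
  destruct (borel_index_onto B HB) as [b Hb].
  assert (HnI : ~ I (borel_index b)).
  { intros H. apply HnB. apply (sigma_ideal_sub I (proj1 HI) _ (borel_index b)); [|exact H].
    intros x. apply Hb. }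
  destruct (omega1_le_upper_bound t b) as [m [Htm Hbm]].
  set (serve a := epsilon (inhabits O) (fun n => pair_enum a n = (t, b))).
  assert (Hserve : forall a, le m a -> pair_enum a (serve a) = (t, b)).
  { intros a Ha. apply epsilon_spec. apply pair_enum_onto; eapply omega1_le_trans; eauto. }
  apply (standing_R_uncountable I HI).
  apply (sigma_ideal_sub _ countable_R_sigma_ideal _ (fun a => lt a m \/ le m a)).
  { intros a _. destruct (omega1_lt_trichotomy a m) as [H | [-> | H]]; unfold le; auto. }
  apply sigma_ideal_union; [apply countable_R_sigma_ideal | apply Hlt |].
  apply (countable_R_inj (fun a => le m a) (fun x => piece t x /\ B x)
           (fun a => stage_point (a, S (serve a)))); [| | exact Hcnt].
  - intros a1 a2 H1 H2 E.
    assert (Hnew : forall a, le m a -> ~ earlier_points (a, S (serve a)) (stage_point (a, S (serve a)))).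
    { intros a Ha. apply stage_point_admissible. rewrite Hserve by exact Ha. exact HnI. }
    destruct (omega1_lt_trichotomy a1 a2) as [H | [-> | H]]; [exfalso | reflexivity | exfalso].
    + apply (Hnew a2 H2). exists (a1, S (serve a1)). split; [left; exact H | exact E].
    + apply (Hnew a1 H1). exists (a2, S (serve a2)). split; [left; exact H | symmetry; exact E].
  - intros a Ha. destruct (serving_stage_point a t b (serve a) (Hserve a Ha) HnI) as [Hp Hx].
    split; [exact Hp | apply Hb, Hx].
Qed.

(* From stage [(c, 1)] on, new points avoid the small set [B_c]. *)
Lemma piece_ideal_countable (t : R) (J : R -> Prop) :
  I J -> countable_R (fun x => piece t x /\ J x).
Proof.
  intros HJ. destruct HI as [HsI [_ [_ [_ [Hhull _]]]]].
  destruct (Hhull J HJ) as [B [HB [HIB HJB]]].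
  destruct (borel_index_onto B HB) as [c Hc].
  assert (HIc : I (borel_index c)).
  { apply (sigma_ideal_sub I HsI _ B); [intros x; apply Hc | exact HIB]. }
  apply (sigma_ideal_sub _ countable_R_sigma_ideal _ (fun x => x = t \/ points_upto c x)).
  - intros x [[[a k] [<- [Ht Hmin]]] Jx].
    destruct (omega1_lt_trichotomy a c) as [H | Hca].
    { right. exists a, k. split; [left; exact H | reflexivity]. }
    assert (Hle : le c a) by (destruct Hca as [-> | H]; [right | left]; auto).
    destruct k as [|n].
    { left. rewrite stage_point_0. exact Ht. }
    exfalso. destruct (stage_point_S a n) as [[_ [Hsmall _]] | [_ Ha]].
    + apply Hsmall. exists c. repeat split; [exact Hle | exact HIc | apply Hc, HJB, Jx].
    + apply (Hmin (a, O)); [right; simpl; split; [reflexivity | lia]|].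
      rewrite stage_point_0, Ha. reflexivity.
  - apply sigma_ideal_union;
      [apply countable_R_sigma_ideal | apply countable_R_singleton | apply points_upto_countable].
Qed.

Lemma piece_strong_Luzin (t : R) : CH -> strong_I_Luzin I (piece t).
Proof.
  intros HCH.
  assert (Hunc : ~ countable_R (fun x => piece t x /\ True)).
  { apply piece_Borel_uncountable; [|apply HI].
    apply Borel_open. intros x _. exists 1. split; [lra | auto]. }
  split; [split|].
  - destruct (HCH (piece t)) as [Hcnt | Hc]; [|exact Hc].
    exfalso. apply Hunc. apply (sigma_ideal_sub _ countable_R_sigma_ideal _ (piece t)); [|exact Hcnt].
    intros x [H _]. exact H.
  - apply piece_ideal_countable.
  - apply piece_Borel_uncountable.
Qed.

End Construction.

Theorem mainTheorem3 (HCH : CH) (I : (R -> Prop) -> Prop)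
  (HI : standing_assumptions I) :
  exists P : R -> (R -> Prop),
    (forall i, strong_I_Luzin I (P i)) /\
    (forall i j x, i <> j -> P i x -> P j x -> False) /\
    (forall x, exists i, P i x).
Proof.
  destruct (omega1_order_exists HCH) as [lt Hlt].
  exists (piece I lt Hlt).
  split; [|split].
  - intros t. apply piece_strong_Luzin; assumption.
  - apply piece_disjoint.
  - apply piece_cover.
Qed.
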